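(* Let $N\ge 2$, $0<k\le N$, and $\mathfrak D_0(N,k)=\mathfrak D(N,k)\cap\mathfrak{su}(N)$, where $\mathfrak D(N,k)$ is the set of skew-Hermitian $N\times N$ complex matrices $A$ with $A_{ij}=0$ unless $k$ divides $i-j$. Then the discrete Laplacian $\Delta_N$ restricts to a vector space automorphism (linear bijection) of $\mathfrak D_0(N,k)$. Consequently the quantized Euler equations $\dot W=[\Delta_N^{-1}W,W]_N$ on $\mathfrak{su}(N)$ restrict to $\mathfrak D_0(N,k)$: the vector field $W\mapsto[\Delta_N^{-1}W,W]_N$ maps $\mathfrak D_0(N,k)$ into itself.
   Context: $\mathfrak{su}(N)$ is the Lie algebra of traceless skew-Hermitian $N\times N$ matrices, and $[A,B]_N=N^{3/2}(AB-BA)$. Let $\varrho$ be the irreducible $N$-dimensional representation of $\mathfrak{su}(2)$ by skew-Hermitian matrices and $X_1,X_2,X_3$ a basis of $\mathfrak{su}(2)$ orthonormal with respect to a non-degenerate ad-invariant bilinear form; the discrete Laplacian is $\Delta_N(Y)=\sum_{i=1}^3[\varrho(X_i),[\varrho(X_i),Y]]$, which is invertible on $\mathfrak{su}(N)$, and $\Delta_N^{-1}$ denotes its inverse there. *)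

From HB Require Import structures.
From mathcomp Require Import all_boot all_order all_algebra.
Set Implicit Arguments. Unset Strict Implicit. Unset Printing Implicit Defensive.
Import Order.TTheory GRing.Theory Num.Theory.
Local Open Scope ring_scope.

Section Defs.
Variable C : numClosedFieldType.

Definition skew_herm (N : nat) (A : 'M[C]_N) : Prop :=
  (map_mx Num.conj A)^T = - A.

Definition suN (N : nat) (A : 'M[C]_N) : Prop := skew_herm A /\ \tr A = 0.

Definition Dmat (N k : nat) (A : 'M[C]_N) : Prop :=
  skew_herm A /\
  forall i j : 'I_N, ~ (((k : int) %| (i : int) - (j : int))%Z) -> A i j = 0.

Definition D0 (N k : nat) (A : 'M[C]_N) : Prop := Dmat k A /\ suN A.

Definition comm (N : nat) (A B : 'M[C]_N) : 'M[C]_N := A *m B - B *m A.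

Definition qbracket (N : nat) (A B : 'M[C]_N) : 'M[C]_N :=
  (N%:R * sqrtC (N%:R)) *: comm A B.

(* Standard spin s = (N-1)/2 representation, basis index m : 'I_N,
   weight mu m = s - m. *)
Definition spin (N : nat) : C := (N%:R - 1) / 2%:R.
Definition weight (N : nat) (m : nat) : C := spin N - m%:R.

Definition Jplus (N : nat) : 'M[C]_N :=
  \matrix_(i, j) (if (i.+1 == j :> nat)
     then sqrtC (spin N * (spin N + 1) - weight N j * (weight N j + 1))
     else 0).
Definition Jminus (N : nat) : 'M[C]_N := (Jplus N)^T.
Definition J3 (N : nat) : 'M[C]_N := \matrix_(i, j) (if i == j then weight N i else 0).

(* Skew-Hermitian images rho(e_1), rho(e_2), rho(e_3) of the standard basis
   of su(2) ([e1,e2]=e3, [e2,e3]=e1, [e3,e1]=e2):  S_k = -i J_k. *)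
Definition rhoS (N : nat) (j : 'I_3) : 'M[C]_N :=
  if j == 0 :> nat then (- 'i / 2%:R) *: (Jplus N + Jminus N)
  else if j == 1 :> nat then (- 1 / 2%:R) *: (Jplus N - Jminus N)
  else (- 'i) *: J3 N.

Definition rhoX (N : nat) (a : 'M[C]_3) (i : 'I_3) : 'M[C]_N :=
  \sum_j a i j *: rhoS N j.

Definition Lap (N : nat) (a : 'M[C]_3) (Y : 'M[C]_N) : 'M[C]_N :=
  \sum_i comm (rhoX N a i) (comm (rhoX N a i) Y).

End Defs.

From HB Require Import structures.
From mathcomp Require Import all_boot all_order all_algebra.
From mathcomp Require Import ring.
Import Order.TTheory GRing.Theory Num.Theory.
Set Implicit Arguments. Unset Strict Implicit. Unset Printing Implicit Defensive.
Local Open Scope ring_scope.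

(* Since a^T a = c 1, the Laplacian is c times the Casimir operator
   sum_j [rho(e_j), [rho(e_j), .]] = -([J3,[J3,.]] + ([J+,[J-,.]] + [J-,[J+,.]])/2).
   J3, J+ and J- shift the index difference i - j by 0, -1 and +1, so the Casimir
   preserves the condition k | i - j.  For skew-Hermitian X one has
   tr (Y^* [X,[X,Y]]) = - |[X,Y]|^2, so a matrix killed by the Casimir commutes with
   J3 and J+, hence is scalar, hence zero if traceless.  An injective endomorphism
   of the finite-dimensional space of traceless band matrices is onto it, and the
   preimage of a skew-Hermitian matrix is skew-Hermitian because the Laplacian
   commutes with Y |-> Y^*.  Finally D_0(N,k) is closed under commutators. *)

Local Notation "A ^H" := ((map_mx Num.conj A)^T) (at level 8, format "A ^H").

Section Commutator.
Variables (C : numClosedFieldType) (n : nat).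
Implicit Types (A B X Y Z : 'M[C]_n).

Fact comm_is_linear A : linear (comm A).
Proof.
move=> x B D; rewrite /comm mulmxDr mulmxDl -!scalemxAl -!scalemxAr.
by rewrite scalerBr addrACA opprD.
Qed.

HB.instance Definition _ A :=
  GRing.isLinear.Build C 'M_n 'M_n _ (comm A) (comm_is_linear A).

Lemma comm_antisym A B : comm A B = - comm B A.
Proof. by rewrite /comm opprB. Qed.

Lemma commDl A B Y : comm (A + B) Y = comm A Y + comm B Y.
Proof. by rewrite /comm mulmxDl mulmxDr opprD addrACA. Qed.

Lemma commNl A Y : comm (- A) Y = - comm A Y.
Proof. by rewrite /comm mulNmx mulmxN opprK opprB addrC. Qed.

Lemma commBl A B Y : comm (A - B) Y = comm A Y - comm B Y.
Proof. by rewrite commDl commNl. Qed.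

Lemma commDr A B Y : comm Y (A + B) = comm Y A + comm Y B.
Proof. exact: linearD. Qed.

Lemma commNr A Y : comm Y (- A) = - comm Y A.
Proof. exact: linearN. Qed.

Lemma commZl x A Y : comm (x *: A) Y = x *: comm A Y.
Proof. by rewrite /comm -scalemxAl -scalemxAr scalerBr. Qed.

Lemma ad2D A B Y : comm (A + B) (comm (A + B) Y) =
  comm A (comm A Y) + comm A (comm B Y) + (comm B (comm A Y) + comm B (comm B Y)).
Proof. by rewrite 2!commDl 2!commDr. Qed.

Lemma comm_suml (I : finType) (F : I -> 'M_n) Y :
  comm (\sum_i F i) Y = \sum_i comm (F i) Y.
Proof.
have comm0l : comm 0 Y = 0 by rewrite /comm mul0mx mulmx0 subrr.
exact: (big_morph (fun A => comm A Y) (fun A B => commDl A B Y) comm0l).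
Qed.

Lemma comm_diag_mxE (d : 'rV[C]_n) Y i j :
  comm (diag_mx d) Y i j = (d 0 i - d 0 j) * Y i j.
Proof. by rewrite /comm mul_diag_mx mul_mx_diag !mxE mulrBl [Y i j * _]mulrC. Qed.

Lemma comm_is_diagE A Y i j : is_diag_mx Y -> comm A Y i j = A i j * (Y j j - Y i i).
Proof.
move=> /is_diag_mxP Ydiag; rewrite /comm !mxE (bigD1 j) //= big1 ?addr0 => [|l lj].
  rewrite (bigD1 i) //= big1 ?addr0 => [|l li]; last by rewrite Ydiag ?mul0r // eq_sym.
  by rewrite mulrBr [Y i i * _]mulrC.
by rewrite Ydiag ?mulr0.
Qed.

Lemma mxtrace_comm A B : \tr (comm A B) = 0.
Proof. by rewrite /comm raddfB /= mxtrace_mulC subrr. Qed.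

Lemma ctmx_mul A B : (A *m B)^H = B^H *m A^H.
Proof. by rewrite map_mxM trmx_mul. Qed.

Lemma mxtrace_ctmx A : \tr A^H = (\tr A)^*.
Proof. by rewrite mxtrace_tr rmorph_sum; apply: eq_bigr => i _; rewrite mxE. Qed.

Lemma ctmx_comm A B : (comm A B)^H = comm B^H A^H.
Proof. by rewrite /comm map_mxB raddfB /= !ctmx_mul. Qed.

Lemma comm_skew A B : skew_herm A -> skew_herm B -> skew_herm (comm A B).
Proof.
rewrite /skew_herm ctmx_comm => -> ->.
by rewrite /comm !mulNmx !mulmxN !opprK opprB.
Qed.

Lemma mxtrace_ctmx_mulE Z : \tr (Z^H *m Z) = \sum_i \sum_l Z l i * (Z l i)^*.
Proof.
by apply: eq_bigr => i _; rewrite mxE; apply: eq_bigr => l _; rewrite !mxE mulrC.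
Qed.

Lemma mxtrace_ctmx_mul_ge0 Z : 0 <= \tr (Z^H *m Z).
Proof.
rewrite mxtrace_ctmx_mulE.
by apply: sumr_ge0 => i _; apply: sumr_ge0 => l _; apply: mul_conjC_ge0.
Qed.

Lemma mxtrace_ctmx_mul_eq0 Z : \tr (Z^H *m Z) = 0 -> Z = 0.
Proof.
rewrite mxtrace_ctmx_mulE => Z0; apply/matrixP => l i; rewrite mxE.
have ge0 j l' : 0 <= Z l' j * (Z l' j)^* := mul_conjC_ge0 _.
have Zi0 := psumr_eq0P (fun j _ => sumr_ge0 _ (fun l' _ => ge0 j l')) Z0 (i := i) isT.
have /eqP := psumr_eq0P (fun l' _ => ge0 i l') Zi0 (i := l) isT.
by rewrite mul_conjC_eq0 => /eqP.
Qed.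

Lemma mxtrace_ad2 X Y : skew_herm X ->
  \tr (Y^H *m comm X (comm X Y)) = - \tr ((comm X Y)^H *m comm X Y).
Proof.
move=> skewX; have cyclic W : \tr (Y^H *m comm X W) = \tr (comm Y^H X *m W).
  rewrite /comm mulmxBr mulmxBl !raddfB /= !mulmxA.
  by rewrite [\tr (Y^H *m W *m X)]mxtrace_mulC mulmxA.
by rewrite cyclic ctmx_comm skewX linearN mulNmx raddfN opprK.
Qed.

Lemma sum_ad2_eq0 (I : finType) (X : I -> 'M_n) Y :
  (forall i, skew_herm (X i)) -> \sum_i comm (X i) (comm (X i) Y) = 0 ->
  forall i, comm (X i) Y = 0.
Proof.
move=> skewX sum0 i; apply: mxtrace_ctmx_mul_eq0.
have norms0 : \sum_j \tr ((comm (X j) Y)^H *m comm (X j) Y) = 0.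
  apply/eqP; rewrite -oppr_eq0 -sumrN.
  under eq_bigr do rewrite -mxtrace_ad2 //.
  by rewrite -raddf_sum -mulmx_sumr sum0 mulmx0 raddf0.
exact: (psumr_eq0P (fun j _ => mxtrace_ctmx_mul_ge0 _) norms0 (i := i) isT).
Qed.

Lemma sum_ad2_lincomb m (a : 'M[C]_m) c (S : 'I_m -> 'M_n) Y :
  a^T *m a = c%:M ->
  \sum_i comm (\sum_j a i j *: S j) (comm (\sum_j a i j *: S j) Y)
    = c *: \sum_j comm (S j) (comm (S j) Y).
Proof.
move=> aTa; pose T j l := comm (S j) (comm (S l) Y).
transitivity (\sum_i \sum_j \sum_l (a i j * a i l) *: T j l).
  apply: eq_bigr => i _; rewrite comm_suml; apply: eq_bigr => j _.
  rewrite commZl comm_suml linear_sum scaler_sumr; apply: eq_bigr => l _.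
  by rewrite commZl linearZ scalerA.
rewrite exchange_big scaler_sumr; apply: eq_bigr => j _ /=.
have aTaE l : \sum_i a i j * a i l = c *+ (j == l).
  have := congr1 (fun M : 'M_m => M j l) aTa; rewrite !mxE.
  by under eq_bigr do rewrite mxE.
rewrite exchange_big (bigD1 j) //= -!scaler_suml aTaE eqxx big1 ?addr0 // => l lj.
by rewrite -scaler_suml aTaE eq_sym (negPf lj) scale0r.
Qed.

End Commutator.

Lemma mulmx_scalar_sym (F : fieldType) m (A B : 'M[F]_m) c :
  c != 0 -> A *m B = c%:M -> B *m A = c%:M.
Proof.
move=> c0 AB; have /mulmx1C : A *m (c^-1 *: B) = 1%:M.
  by rewrite -scalemxAr AB scale_scalar_mx mulVf.
rewrite -scalemxAl => /(congr1 ( *:%R c)).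
by rewrite scalerA mulfV // scale1r scale_scalar_mx mulr1.
Qed.

Lemma limg_stable_inj (K : fieldType) (vT : vectType K) (f : 'End(vT))
    (U : {vspace vT}) :
  (f @: U <= U)%VS -> (U :&: lker f = 0)%VS -> (f @: U)%VS = U.
Proof. by move=> fUU ker0; apply/eqP; rewrite eqEdim fUU (limg_dim_eq ker0) leqnn. Qed.

Lemma eq_ord_consecutive (T : Type) n (f : 'I_n -> T) :
  (forall i j : 'I_n, i.+1 = j :> nat -> f i = f j) -> forall i j, f i = f j.
Proof.
move=> step; suff le (i j : 'I_n) : (i <= j)%N -> f i = f j.
  by move=> i j; case: (leqP i j) => [/le | /ltnW/le/esym].
case: j => j; elim: j => [|j IHj] ltjn ij.
  by congr f; apply: val_inj; apply/eqP; rewrite -leqn0.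
case: (ltngtP i j.+1) ij => // [ltij _ | /= eqij _]; last by congr f; exact: val_inj.
by rewrite (IHj (ltnW ltjn) ltij); apply: step.
Qed.

Section Grading.
Variables (C : numClosedFieldType) (n k : nat).
Implicit Types (A B Y : 'M[C]_n).

Definition graded (r : int) A :=
  forall i j : 'I_n, ~ ((k : int) %| (i : int) - (j : int) - r)%Z -> A i j = 0.

Lemma gradedD r A B : graded r A -> graded r B -> graded r (A + B).
Proof. by move=> gA gB i j ndvd; rewrite mxE gA // gB // addr0. Qed.

Lemma gradedN r A : graded r A -> graded r (- A).
Proof. by move=> gA i j ndvd; rewrite mxE gA // oppr0. Qed.

Lemma gradedZ r x A : graded r A -> graded r (x *: A).
Proof. by move=> gA i j ndvd; rewrite mxE gA // mulr0. Qed.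

Lemma graded_mul r s A B : graded r A -> graded s B -> graded (r + s) (A *m B).
Proof.
move=> gA gB i j ndvd; rewrite mxE big1 // => l _.
have [dvd_il|] := boolP ((k : int) %| (i : int) - (l : int) - r)%Z; last first.
  by move/negP/gA ->; rewrite mul0r.
have [dvd_lj|] := boolP ((k : int) %| (l : int) - (j : int) - s)%Z; last first.
  by move/negP/gB ->; rewrite mulr0.
suff : ((k : int) %| (i : int) - (j : int) - (r + s))%Z by [].
have -> : (i : int) - (j : int) - (r + s) =
  ((i : int) - (l : int) - r) + ((l : int) - (j : int) - s) by ring.
exact: rpredD.
Qed.

Lemma graded_comm r s A B : graded r A -> graded s B -> graded (r + s) (comm A B).
Proof.
move=> gA gB; apply: gradedD; first exact: graded_mul.
by apply: gradedN; rewrite addrC; apply: graded_mul.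
Qed.

Lemma graded_ad2 r A B Y :
  graded r A -> graded (- r) B -> graded 0 Y -> graded 0 (comm A (comm B Y)).
Proof.
move=> gA gB gY; rewrite -(subrr r).
by apply: graded_comm gA _; rewrite -[- r]addr0; apply: graded_comm.
Qed.

Lemma Dmat_graded A : Dmat k A <-> skew_herm A /\ graded 0 A.
Proof.
split=> -[skewA gA]; split=> // i j; first by rewrite subr0; apply: gA.
by rewrite -(subr0 (_ - _)); apply: gA.
Qed.

Definition band_proj A : 'M[C]_n :=
  \matrix_(i, j) if ((k : int) %| (i : int) - (j : int))%Z then A i j else 0.

Fact band_proj_is_linear : linear band_proj.
Proof.
by move=> x A B; apply/matrixP => i j; rewrite !mxE; case: ifP; rewrite ?mulr0 ?addr0.
Qed.

HB.instance Definition _ :=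
  GRing.isLinear.Build C 'M_n 'M_n _ band_proj band_proj_is_linear.

Lemma graded_band_proj A : graded 0 (band_proj A).
Proof. by move=> i j; rewrite subr0 mxE => /negP/negPf ->. Qed.

Lemma band_proj_id A : graded 0 A -> band_proj A = A.
Proof.
move=> gA; apply/matrixP => i j; rewrite mxE; case: ifP => // /negP ndvd.
by rewrite gA // subr0.
Qed.

Definition traceless_band : {vspace 'M[C]_n} :=
  (limg (linfun band_proj) :&: lker (linfun (@mxtrace C n : 'M_n -> C^o)))%VS.

Lemma memv_traceless_band A : A \in traceless_band <-> graded 0 A /\ \tr A = 0.
Proof.
rewrite memv_cap memv_ker lfunE /=; split.
  case/andP => /memv_imgP[B _ ->] /eqP trA; rewrite lfunE /= in trA *.
  by split=> //; apply: graded_band_proj.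
case=> gA trA; apply/andP; split; last exact/eqP.
by apply/memv_imgP; exists A; rewrite ?memvf // lfunE /= band_proj_id.
Qed.

End Grading.

Section SpinRepresentation.
Variables (C : numClosedFieldType) (N : nat).
Implicit Types (Y : 'M[C]_N).
Local Notation Jp := (Jplus C N).
Local Notation Jm := (Jminus C N).
Local Notation J3 := (J3 C N).
Local Notation S := (rhoS C N).

Lemma conj_weight m : (weight C N m)^* = weight C N m.
Proof. by rewrite /weight /spin rmorphB rmorphM fmorphV rmorphB rmorph1 !rmorph_nat. Qed.

Lemma JplusE (i j : 'I_N) :
  Jp i j = if i.+1 == j then sqrtC (j%:R * (N - j)%:R) else 0.
Proof.
rewrite mxE; case: eqP => // _; congr sqrtC.
rewrite natrB ?(ltnW (ltn_ord j)) // /weight /spin.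
have two_neq0 : (2%:R : C) != 0 by rewrite pnatr_eq0.
by field.
Qed.

Lemma conj_Jplus i j : (Jp i j)^* = Jp i j.
Proof.
rewrite JplusE; case: eqP => _; last exact: rmorph0.
by apply/conj_Creal/sqrtC_real; rewrite -natrM ler0n.
Qed.

Lemma Jplus_neq0 (i j : 'I_N) : i.+1 = j -> Jp i j != 0.
Proof.
move=> ij; rewrite JplusE ij eqxx sqrtC_eq0 -natrM pnatr_eq0 muln_eq0 subn_eq0.
by rewrite -ij -ltnNge ij ltn_ord.
Qed.

Lemma ctmx_Jplus : Jp^H = Jm.
Proof. by apply/matrixP => i j; rewrite 2![LHS]mxE conj_Jplus [RHS]mxE. Qed.

Lemma ctmx_Jminus : Jm^H = Jp.
Proof.
by apply/matrixP => i j; rewrite 2![LHS]mxE [Jm]/Jminus [_^T _ _]mxE conj_Jplus.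
Qed.

Lemma ctmx_J3 : J3^H = J3.
Proof.
apply/matrixP => i j; rewrite !mxE eq_sym.
by case: eqP => [->|_]; rewrite ?conj_weight ?rmorph0.
Qed.

Lemma rhoS_skew j : skew_herm (S j).
Proof.
rewrite /skew_herm /rhoS; case: ifP => _.
  rewrite map_mxZ linearZ /= map_mxD linearD /= ctmx_Jplus ctmx_Jminus addrC.
  by rewrite rmorphM rmorphN /= conjCi fmorphV rmorph_nat mulNr scaleNr.
case: ifP => _.
  rewrite map_mxZ linearZ /= map_mxB linearB /= ctmx_Jplus ctmx_Jminus -opprB scalerN.
  by rewrite rmorphM rmorphN /= rmorph1 fmorphV rmorph_nat.
by rewrite map_mxZ linearZ /= ctmx_J3 rmorphN /= conjCi scaleNr.
Qed.

Lemma J3_rhoS : J3 = 'i *: S 2.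
Proof. by rewrite /rhoS /= scalerA mulrN -expr2 sqrCi opprK scale1r. Qed.

Lemma Jplus_rhoS : Jp = 'i *: S 0 - S 1.
Proof.
have half : 'i * (- 'i / 2%:R) = 2%:R^-1 :> C.
  by rewrite mulrA mulrN -expr2 sqrCi opprK mul1r.
rewrite /rhoS /= scalerA half; move: Jp Jm => P M.
have two_neq0 : (2%:R : C) != 0 by rewrite pnatr_eq0.
by apply/matrixP => i j; rewrite !mxE; field.
Qed.

Lemma sum_ad2_rhoS Y : \sum_j comm (S j) (comm (S j) Y) =
  - (comm J3 (comm J3 Y) + 2%:R^-1 *: (comm Jp (comm Jm Y) + comm Jm (comm Jp Y))).
Proof.
have ad2Z x A : comm (x *: A) (comm (x *: A) Y) = (x * x) *: comm A (comm A Y).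
  by rewrite !commZl linearZ scalerA.
rewrite !big_ord_recl big_ord0 addr0 /rhoS /= !ad2Z.
rewrite !ad2D !commNl !commNr !opprK.
have i2 : 'i * 'i = -1 :> C by rewrite -expr2 sqrCi.
have two_neq0 : (2%:R : C) != 0 by rewrite pnatr_eq0.
have -> : (- 'i / 2%:R) * (- 'i / 2%:R) = - (4%:R^-1) :> C.
  by rewrite mulrACA mulrNN i2 -invfM -natrM mulN1r.
rewrite mulrNN i2.
(* Abstracting the double commutators leaves an entrywise field identity. *)
move: (comm Jp (comm Jp Y)) (comm Jp (comm Jm Y)) (comm Jm (comm Jp Y)).
move: (comm Jm (comm Jm Y)) (comm J3 (comm J3 Y)) => MM T PP PM MP.
by apply/matrixP => i j; rewrite !mxE; field.
Qed.

Lemma J3_diag : J3 = diag_mx (\row_i weight C N i).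
Proof.
by apply/matrixP => i j; rewrite !mxE; case: eqP => _; rewrite ?mulr1n ?mulr0n.
Qed.

Lemma comm_J3_eq0 Y : comm J3 Y = 0 -> is_diag_mx Y.
Proof.
move=> J3Y; apply/is_diag_mxP => i j ij.
have /eqP := congr1 (fun M : 'M_N => M i j) J3Y.
rewrite J3_diag comm_diag_mxE !mxE mulf_eq0 => /orP[|/eqP //].
rewrite subr_eq0 => /eqP/addrI/oppr_inj/eqP; rewrite eqr_nat => ji.
by rewrite ji in ij.
Qed.

Lemma commutant_J3_Jplus Y : comm J3 Y = 0 -> comm Jp Y = 0 -> \tr Y = 0 -> Y = 0.
Proof.
move=> J3Y JpY trY; have offdiag := comm_J3_eq0 J3Y.
have diag_const : forall i j : 'I_N, Y i i = Y j j.
  apply: (@eq_ord_consecutive _ _ (fun i => Y i i)) => i j ij.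
  have /eqP := congr1 (fun M : 'M_N => M i j) JpY.
  rewrite comm_is_diagE // [X in _ == X]mxE mulf_eq0 (negPf (Jplus_neq0 ij)).
  by rewrite subr_eq0 => /eqP.
apply/matrixP => i j; rewrite mxE; have [<-|ij] := eqVneq i j; last first.
  by move/is_diag_mxP: offdiag; apply.
have : \tr Y = Y i i *+ N.
  by rewrite /mxtrace (eq_bigr (fun=> Y i i)) ?sumr_const ?card_ord.
rewrite trY -mulr_natr => /esym/eqP; rewrite mulf_eq0 pnatr_eq0.
by rewrite (gtn_eqF (leq_ltn_trans (leq0n i) (ltn_ord i))) orbF => /eqP.
Qed.

Lemma sum_ad2_rhoS_eq0 Y :
  \sum_j comm (S j) (comm (S j) Y) = 0 -> \tr Y = 0 -> Y = 0.
Proof.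
move=> /(sum_ad2_eq0 rhoS_skew) SY0; apply: commutant_J3_Jplus.
  by rewrite J3_rhoS commZl SY0 scaler0.
by rewrite Jplus_rhoS commBl commZl !SY0 scaler0 subr0.
Qed.

Variable k : nat.

Lemma graded_Jplus : graded k (-1) Jp.
Proof.
move=> i j ndvd; rewrite JplusE; case: eqP => // ij; case: ndvd.
by rewrite -ij -addn1 PoszD opprD addrA subrr add0r subrr dvdz0.
Qed.

Lemma graded_Jminus : graded k 1 Jm.
Proof.
move=> i j ndvd; rewrite mxE graded_Jplus // => dvd_ji; apply: ndvd.
have -> : (i : int) - (j : int) - 1 = - ((j : int) - (i : int) - (-1)) by ring.
by rewrite rpredN.
Qed.

Lemma graded_J3 : graded k 0 J3.
Proof.
move=> i j ndvd; rewrite mxE; case: eqP => // ij; case: ndvd.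
by rewrite ij subrr subr0 dvdz0.
Qed.

Lemma graded_sum_ad2_rhoS (Y : 'M[C]_N) : graded k 0 Y ->
  graded k 0 (\sum_j comm (S j) (comm (S j) Y)).
Proof.
move=> gY; rewrite sum_ad2_rhoS; apply/gradedN/gradedD.
  by apply: (graded_ad2 (r := 0)) gY; rewrite ?oppr0; apply: graded_J3.
apply/gradedZ/gradedD; last exact: graded_ad2 graded_Jminus graded_Jplus gY.
by apply: graded_ad2 graded_Jplus _ gY; rewrite opprK; apply: graded_Jminus.
Qed.

End SpinRepresentation.

Section Laplacian.
Variables (C : numClosedFieldType) (N : nat) (a : 'M[C]_3).
Implicit Types (A B Y : 'M[C]_N).

Fact Lap_is_linear : linear (@Lap C N a).
Proof.
move=> x A B; rewrite /Lap scaler_sumr -big_split; apply: eq_bigr => i _ /=.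
by rewrite [comm _ (x *: A + B)]linearP linearP.
Qed.

HB.instance Definition _ :=
  GRing.isLinear.Build C 'M_N 'M_N _ (@Lap C N a) Lap_is_linear.

Lemma mxtrace_Lap Y : \tr (Lap a Y) = 0.
Proof. by rewrite raddf_sum big1 // => i _; apply: mxtrace_comm. Qed.

Hypothesis a_real : forall i j, a i j \is Num.real.

Lemma rhoX_skew i : skew_herm (rhoX N a i).
Proof.
rewrite /skew_herm /rhoX map_mx_sum raddf_sum -sumrN; apply: eq_bigr => j _ /=.
by rewrite map_mxZ linearZ /= rhoS_skew conj_Creal // scalerN.
Qed.

Lemma ctmx_Lap Y : (Lap a Y)^H = Lap a Y^H.
Proof.
rewrite /Lap map_mx_sum raddf_sum; apply: eq_bigr => i _ /=.
rewrite !ctmx_comm rhoX_skew !commNr commNl opprK.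
by rewrite comm_antisym [comm Y^H _]comm_antisym commNr opprK.
Qed.

Variable c : C.
Hypotheses (c_neq0 : c != 0) (aaT : a *m a^T = c%:M).

Lemma Lap_sum_ad2_rhoS Y :
  Lap a Y = c *: \sum_j comm (rhoS C N j) (comm (rhoS C N j) Y).
Proof. exact/sum_ad2_lincomb/(mulmx_scalar_sym c_neq0 aaT). Qed.

Lemma Lap_eq0 Y : Lap a Y = 0 -> \tr Y = 0 -> Y = 0.
Proof.
rewrite Lap_sum_ad2_rhoS => /eqP; rewrite scaler_eq0 (negPf c_neq0) => /eqP.
exact: sum_ad2_rhoS_eq0.
Qed.

Lemma Lap_inj A B : \tr A = \tr B -> Lap a A = Lap a B -> A = B.
Proof.
move=> trAB LAB; apply/eqP; rewrite -subr_eq0; apply/eqP/Lap_eq0.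
  by rewrite linearB /= LAB subrr.
by rewrite raddfB /= trAB subrr.
Qed.

Lemma graded_Lap k Y : graded k 0 Y -> graded k 0 (Lap a Y).
Proof. by move=> gY; rewrite Lap_sum_ad2_rhoS; apply/gradedZ/graded_sum_ad2_rhoS. Qed.

Lemma Lap_D0 k A : D0 k A -> D0 k (Lap a A).
Proof.
case=> /Dmat_graded[skewA gA] _.
have skewLA : skew_herm (Lap a A) by rewrite /skew_herm ctmx_Lap skewA linearN.
split; last by split=> //; apply: mxtrace_Lap.
by apply/Dmat_graded; split=> //; apply: graded_Lap.
Qed.

Lemma Lap_onto_D0 k B : D0 k B -> exists2 A, D0 k A & Lap a A = B.
Proof.
case=> /Dmat_graded[skewB gB] [_ trB].
pose V := traceless_band C N k; pose L := linfun (@Lap C N a).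
have L_V : (L @: V)%VS = V.
  apply: limg_stable_inj.
    apply/subvP => _ /memv_imgP[Y /memv_traceless_band[gY trY] ->].
    apply/memv_traceless_band; rewrite lfunE /= mxtrace_Lap.
    by split=> //; apply: graded_Lap.
  apply/eqP; rewrite -subv0; apply/subvP => Y /memv_capP[/memv_traceless_band[_ trY]].
  by rewrite memv_ker lfunE memv0 => /eqP LY; rewrite (Lap_eq0 LY).
have : B \in V by apply/memv_traceless_band.
rewrite -L_V => /memv_imgP[A /memv_traceless_band[gA trA]]; rewrite lfunE /= => LA.
have skewA : skew_herm A.
  apply/eqP; rewrite -addr_eq0; apply/eqP/Lap_eq0.
    by rewrite linearD /= -ctmx_Lap -LA skewB addNr.
  by rewrite raddfD /= mxtrace_ctmx trA conjC0 addr0.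
exists A; last by rewrite LA.
by split=> //; apply/Dmat_graded.
Qed.

End Laplacian.

Lemma qbracket_D0 (C : numClosedFieldType) N k (A B : 'M[C]_N) :
  D0 k A -> D0 k B -> D0 k (qbracket A B).
Proof.
move=> [/Dmat_graded[skewA gA] _] [/Dmat_graded[skewB gB] _].
have realN : (N%:R * sqrtC N%:R)^* = N%:R * sqrtC N%:R :> C.
  by apply/conj_Creal/realM; [apply: realn | apply: sqrtC_real; rewrite ler0n].
have skewAB : skew_herm (qbracket A B).
  rewrite /skew_herm /qbracket map_mxZ linearZ /= realN.
  by rewrite (comm_skew skewA skewB) scalerN.
split; last by split; rewrite // /qbracket mxtraceZ mxtrace_comm mulr0.
by apply/Dmat_graded; split=> //; apply: gradedZ; rewrite -(addr0 0); apply: graded_comm.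
Qed.

Theorem mainTheorem5 (C : numClosedFieldType) (N k : nat) (a : 'M[C]_3) (c : C) :
  (2 <= N)%N -> (0 < k <= N)%N ->
  (* X_i = sum_j a i j e_j is an orthonormal basis of su(2) for the
     ad-invariant form c^{-1} <.,.>_std, with c > 0 *)
  (forall i j, a i j \is Num.real) -> 0 < c -> a *m a^T = c%:M ->
  (* Delta_N maps D_0(N,k) into itself ... *)
  (forall A : 'M[C]_N, D0 k A -> D0 k (Lap a A)) /\
  (* ... bijectively *)
  (forall B : 'M[C]_N, D0 k B -> exists! A : 'M[C]_N, D0 k A /\ Lap a A = B) /\
  (* the Euler vector field W |-> [Delta_N^{-1} W, W]_N preserves D_0(N,k):
     P = Delta_N^{-1} W is the (unique) P in su(N) with Delta_N P = W *)
  (forall W P : 'M[C]_N, D0 k W -> suN P -> Lap a P = W ->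
     D0 k (qbracket P W)).
Proof.
move=> _ _ a_real c_gt0 aaT; have c_neq0 : c != 0 := lt0r_neq0 c_gt0.
have Lap_inj_su P Q : suN P -> suN Q -> Lap a P = Lap a Q -> P = Q.
  by move=> [_ trP] [_ trQ]; apply: (Lap_inj c_neq0 aaT); rewrite trP trQ.
have onto := Lap_onto_D0 a_real c_neq0 aaT.
split; first exact: (Lap_D0 a_real c_neq0 aaT).
split=> [B /onto[A D0A LA] | W P D0W suP LP].
  exists A; split=> // A' [D0A' LA'].
  by apply: Lap_inj_su D0A.2 D0A'.2 _; rewrite LA LA'.
move: (D0W) => /onto[A D0A LA].
have -> : P = A by apply: Lap_inj_su suP D0A.2 _; rewrite LP LA.
exact: qbracket_D0.
Qed.
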